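(* Let $G<\operatorname{Aut}(T)$ be the group generated by the automorphisms $a,b,c$ of the $6$-ary rooted tree $T=\{1,\dots,6\}^*$ defined by the wreath recursions $a=\langle\!\langle b^{-1},1,b,c^{-1},1,c\rangle\!\rangle(13)(25)(46)$, $b=\langle\!\langle b,b^{-1},1,c,c^{-1},1\rangle\!\rangle(2356)$, $c=(123)(456)$. Then $G$ is recurrent; consequently $G$ is level-transitive.
   Context: $T$ is the tree of finite words over $X=\{1,\dots,6\}$, rooted at the empty word, each word $v$ joined to $vx$. Automorphisms act on the right. The wreath recursion $g=\langle\!\langle g_1,\dots,g_6\rangle\!\rangle\sigma$ with $g_i\in\operatorname{Aut}(T)$, $\sigma$ a permutation of $X$, means $(xv)^g=x^\sigma v^{g_x}$ for $x\in X$, $v\in X^*$; $g_x=g|_x$ is the restriction (section) of $g$ at $x$. A self-similar group $G$ is recurrent if it acts transitively on $X$ and, for some (equivalently every) $x\in X$, the map $G_x\to G$, $g\mapsto g|_x$, from the stabilizer $G_x=\{g\in G:x^g=x\}$ is onto. Level-transitive means transitive on $X^n$ for all $n$. (This $G$ is $\operatorname{IMG}(f_1)$ for $f_1(z)=\frac{2(z^2-3/4)^3}{z^2(z^2-9/8)^2}-1$.) *)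

From mathcomp Require Import all_boot.
Set Implicit Arguments. Unset Strict Implicit. Unset Printing Implicit Defensive.

(* Alphabet X = {1,...,6}, encoded as 'I_6 : letter k+1 of the paper is the
   ordinal k. Words of the tree T = X^* are seq X; the root is [::]. *)
Definition X := 'I_6.
Definition lt (k : nat) : X := inord k.

Inductive gen := GA | GB | GC.

(* Permutations sigma_g (right action, x |-> x^sigma), on 0-based labels.
   a : (13)(25)(46)   b : (2356)   c : (123)(456)                         *)
Definition sigma (g : gen) (x : X) : X :=
  match g with
  | GA => lt (nth 0 [:: 2; 4; 0; 5; 1; 3] x)
  | GB => lt (nth 0 [:: 0; 2; 4; 3; 5; 1] x)
  | GC => lt (nth 0 [:: 1; 2; 0; 4; 5; 3] x)
  end.

Definition sigmainv (g : gen) (x : X) : X :=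
  match g with
  | GA => lt (nth 0 [:: 2; 4; 0; 5; 1; 3] x)
  | GB => lt (nth 0 [:: 0; 5; 1; 3; 2; 4] x)
  | GC => lt (nth 0 [:: 2; 0; 1; 5; 3; 4] x)
  end.

(* A letter of the generating set: (g, false) = g, (g, true) = g^{-1}. *)
Definition letter := (gen * bool)%type.

(* Sections g|_x of the generators, as letters (None = identity):
   a = <<b^{-1},1,b,c^{-1},1,c>>, b = <<b,b^{-1},1,c,c^{-1},1>>, c = <<1,...,1>>. *)
Definition sect0 (g : gen) (x : X) : option letter :=
  match g with
  | GA => nth None [:: Some (GB, true); None; Some (GB, false);
                       Some (GC, true); None; Some (GC, false)] x
  | GB => nth None [:: Some (GB, false); Some (GB, true); None;
                       Some (GC, false); Some (GC, true); None] x
  | GC => None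
  end.

(* For g = <<g_1..g_6>> sigma, g^{-1} = <<...>> sigma^{-1} with
   (g^{-1})|_y = (g|_{y^{sigma^{-1}}})^{-1}. *)
Definition perm_l (l : letter) (x : X) : X :=
  if l.2 then sigmainv l.1 x else sigma l.1 x.

Definition sect_l (l : letter) (x : X) : option letter :=
  if l.2 then omap (fun m : letter => (m.1, ~~ m.2)) (sect0 l.1 (sigmainv l.1 x))
  else sect0 l.1 x.

Fixpoint act_l (l : letter) (w : seq X) : seq X :=
  match w with
  | [::] => [::]
  | x :: v => perm_l l x :: match sect_l l x with
                            | None => v
                            | Some m => act_l m v
                            end
  end.

(* Action of a product of letters (right action: apply first letter first). *)
Definition act_w (s : seq letter) (w : seq X) : seq X :=
  foldl (fun u l => act_l l u) w s.

Definition inG (g : seq X -> seq X) : Prop :=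
  exists s : seq letter, forall w, g w = act_w s w.

Definition section (g : seq X -> seq X) (x : X) : seq X -> seq X :=
  fun v => behead (g (x :: v)).

Definition recurrent : Prop :=
  (forall x y : X, exists g, inG g /\ g [:: x] = [:: y]) /\
  exists x : X, forall h, inG h ->
    exists g, inG g /\ g [:: x] = [:: x] /\ forall v, section g x v = h v.

Definition level_transitive : Prop :=
  forall (n : nat) (u v : seq X), size u = n -> size v = n ->
    exists g, inG g /\ g u = v.

(* The identity a = b^-1 c^-1 holds already on the first level (the sections
   agree letter by letter), so G = <b, c>.  Each of b^±1, c^±1 has a lift: a
   word of G fixing the letter 1 whose section at 1 is that generator (b lifts
   to itself, c to c b^-1 b^-1 a c^-1, c^-1 to c a b b c^-1), and lifts
   multiply, so every element of G is a section at 1 of an element of the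
   stabilizer; together with transitivity on X this is recurrence.
   Level-transitivity follows by induction on the level: move the first letter
   to 1, fix 1 while moving the rest of the word by a lift of an element given
   by the induction hypothesis, and move 1 to the target first letter. *)

From mathcomp Require Import all_boot.

Set Implicit Arguments.
Unset Strict Implicit.
Unset Printing Implicit Defensive.

Local Notation a := (GA, false).
Local Notation a' := (GA, true).
Local Notation b := (GB, false).
Local Notation b' := (GB, true).
Local Notation c := (GC, false).
Local Notation c' := (GC, true).
Local Notation x1 := (lt 0).

Definition oseq (o : option letter) : seq letter :=
  if o is Some m then [:: m] else [::].

Fixpoint perm_w (s : seq letter) (x : X) : X :=
  if s is l :: s' then perm_w s' (perm_l l x) else x.

Fixpoint sect_w (s : seq letter) (x : X) : seq letter :=
  if s is l :: s' then oseq (sect_l l x) ++ sect_w s' (perm_l l x) else [::].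

Lemma act_w_cat s1 s2 w : act_w (s1 ++ s2) w = act_w s2 (act_w s1 w).
Proof. by rewrite /act_w foldl_cat. Qed.

Lemma act_w_nil s : act_w s [::] = [::].
Proof. by elim: s. Qed.

Lemma act_l_cons l x v :
  act_l l (x :: v) = perm_l l x :: act_w (oseq (sect_l l x)) v.
Proof. by rewrite /=; case: (sect_l l x). Qed.

Lemma act_w_cons s x v :
  act_w s (x :: v) = perm_w s x :: act_w (sect_w s x) v.
Proof.
elim: s x v => [|l s IHs] x v //.
rewrite -[LHS]/(act_w s (act_l l (x :: v))).
by rewrite act_l_cons IHs act_w_cat.
Qed.

Lemma size_act_l l w : size (act_l l w) = size w.
Proof.
by elim: w l => [|x v IHv] l //=; case: (sect_l l x) => [m|] //=; rewrite IHv.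
Qed.

Lemma size_act_w s w : size (act_w s w) = size w.
Proof. by elim: s w => [|l s IHs] w //=; rewrite IHs size_act_l. Qed.

(* [lt k] is stuck under simplification ([insub] goes through the opaque
   [idP]); [ord6 k] is a closed ordinal, so goals about concrete letters
   compute once every [lt k] is rewritten into it. *)
Definition ord6 (k : nat) : X :=
  match k with
  | 1 => @Ordinal 6 1 isT | 2 => @Ordinal 6 2 isT | 3 => @Ordinal 6 3 isT
  | 4 => @Ordinal 6 4 isT | 5 => @Ordinal 6 5 isT | _ => @Ordinal 6 0 isT
  end.

Lemma lt_ord6 k : lt k = ord6 k.
Proof.
apply: val_inj; rewrite /lt /inord val_insubd.
by case: k => [|[|[|[|[|[|k]]]]]].
Qed.

Lemma X_cases (P : X -> Prop) :
  P (ord6 0) -> P (ord6 1) -> P (ord6 2) -> P (ord6 3) -> P (ord6 4) ->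
  P (ord6 5) -> forall x, P x.
Proof.
move=> P0 P1 P2 P3 P4 P5 x.
have -> : x = lt x by apply/val_inj; rewrite /= inordK.
by rewrite lt_ord6; case: x => [[|[|[|[|[|[|k]]]]]] ?].
Qed.

Ltac compute_letters :=
  rewrite /= /perm_l /sect_l /sigma /sigmainv /sect0 /=;
  repeat rewrite lt_ord6 /=.

Definition inv_letter (l : letter) : letter := (l.1, ~~ l.2).

Lemma inv_letterK : involutive inv_letter.
Proof. by case=> g e; rewrite /inv_letter negbK. Qed.

Lemma perm_inv_letter l x : perm_l (inv_letter l) (perm_l l x) = x.
Proof. by case: l => [[] []]; move: x; apply: X_cases; compute_letters. Qed.

Lemma sect_inv_letter l x :
  sect_l (inv_letter l) (perm_l l x) = omap inv_letter (sect_l l x).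
Proof. by case: l => [[] []]; move: x; apply: X_cases; compute_letters. Qed.

Lemma act_inv_letterK l : cancel (act_l l) (act_l (inv_letter l)).
Proof.
move=> w; elim: w l => [|x v IHv] l //=.
rewrite perm_inv_letter sect_inv_letter.
by case: (sect_l l x) => [m|] //=; rewrite IHv.
Qed.

Definition inv_word (s : seq letter) : seq letter := rev (map inv_letter s).

Lemma act_inv_wordK s : cancel (act_w s) (act_w (inv_word s)).
Proof.
elim: s => [|l s IHs] w //=.
by rewrite /inv_word map_cons rev_cons -cats1 act_w_cat IHs /= act_inv_letterK.
Qed.

Lemma act_wK s : cancel (act_w (inv_word s)) (act_w s).
Proof.
have := act_inv_wordK (inv_word s).
by rewrite /inv_word map_rev revK (mapK inv_letterK).
Qed.

Lemma inG_id : inG id.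
Proof. by exists [::]. Qed.

Lemma inG_comp g h : inG g -> inG h -> inG (h \o g).
Proof.
by move=> [s gs] [t ht]; exists (s ++ t) => w; rewrite act_w_cat /= gs ht.
Qed.

Lemma inG_inv g : inG g -> exists2 g', inG g' & cancel g' g.
Proof.
move=> [s gs]; exists (act_w (inv_word s)); first by exists (inv_word s).
by move=> w; rewrite gs act_wK.
Qed.

Lemma inG_section g : inG g -> forall x, inG (section g x).
Proof.
by move=> [s gs] x; exists (sect_w s x) => v; rewrite /section gs act_w_cons.
Qed.

Lemma inG_cons g x y :
  inG g -> g [:: x] = [:: y] -> forall v, g (x :: v) = y :: section g x v.
Proof.
move=> [s gs] + v; rewrite /section !gs !act_w_cons act_w_nil.
by case=> ->.
Qed.

Lemma size_inG g : inG g -> forall w, size (g w) = size w.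
Proof. by move=> [s gs] w; rewrite gs size_act_w. Qed.

Lemma recurrent_level_transitive : recurrent -> level_transitive.
Proof.
move=> [trans [x lift]] n.
elim: n => [|n IHn] [|x' u] [|y v] //.
  by move=> _ _; exists id; split; [exact: inG_id |].
move=> [size_u] [size_v].
have [g1 [Gg1 g1x']] := trans x' x.
have [g2 [Gg2 g2x]] := trans x y.
have [s Gs sK] := inG_inv (inG_section Gg2 x).
have size_u1 : size (section g1 x' u) = n.
  by rewrite (size_inG (inG_section Gg1 x')).
have size_sv : size (s v) = n by rewrite (size_inG Gs).
have [k [Gk kuv]] := IHn _ _ size_u1 size_sv.
have [k' [Gk' [k'x sect_k']]] := lift k Gk.
exists (g2 \o k' \o g1); split; first exact: inG_comp Gg1 (inG_comp Gk' Gg2).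
rewrite /= (inG_cons Gg1 g1x') (inG_cons Gk' k'x) (inG_cons Gg2 g2x).
by rewrite sect_k' kuv sK.
Qed.

Lemma act_a v : act_l a v = act_w [:: b'; c'] v.
Proof.
by case: v => [|x v] //; move: x v; apply: X_cases => v; compute_letters.
Qed.

Lemma act_a' v : act_l a' v = act_w [:: c; b] v.
Proof.
by case: v => [|x v] //; move: x v; apply: X_cases => v; compute_letters.
Qed.

Definition lift_letter (l : letter) : seq letter :=
  match l with
  | (GA, false) => [:: b'; c; a; b; b; c']
  | (GA, true) => [:: c; b'; b'; a; c'; b]
  | (GB, false) => [:: b]
  | (GB, true) => [:: b']
  | (GC, false) => [:: c; b'; b'; a; c']
  | (GC, true) => [:: c; a; b; b; c']
  end.

Lemma act_lift_letter l w : act_w (lift_letter l) (x1 :: w) = x1 :: act_l l w.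
Proof.
rewrite act_w_cons.
by case: l => [[] []]; rewrite ?act_a ?act_a'; compute_letters.
Qed.

Definition lift_word (s : seq letter) : seq letter :=
  flatten (map lift_letter s).

Lemma act_lift_word s w : act_w (lift_word s) (x1 :: w) = x1 :: act_w s w.
Proof.
elim: s w => [|l s IHs] w //=.
by rewrite act_w_cat act_lift_letter IHs.
Qed.

Definition word_from_x1 (y : X) : seq letter :=
  nth [::] [:: [::]; [:: c]; [:: a]; [:: a; b; c']; [:: a; b]; [:: c; b']] y.

Lemma act_word_from_x1 y : act_w (word_from_x1 y) [:: x1] = [:: y].
Proof.
by rewrite act_w_cons act_w_nil; move: y; apply: X_cases; compute_letters.
Qed.

Lemma transitive_X x y : exists g, inG g /\ g [:: x] = [:: y].
Proof.
exists (act_w (inv_word (word_from_x1 x) ++ word_from_x1 y)).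
split; first by eexists.
by rewrite act_w_cat -{1}(act_word_from_x1 x) act_inv_wordK act_word_from_x1.
Qed.

Lemma recurrent_G : recurrent.
Proof.
split; first exact: transitive_X.
exists x1 => h [s hs]; exists (act_w (lift_word s)); split; first by eexists.
rewrite act_lift_word act_w_nil; split=> // v.
by rewrite /section act_lift_word hs.
Qed.

Theorem lemma11p5 : recurrent /\ level_transitive.
Proof. by split; [|apply: recurrent_level_transitive]; exact: recurrent_G. Qed.
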